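(* Suppose the nilpotent subalgebra $N=\mathrm{span}_{\mathbb{C}}\{I_{m+1},\dots,I_n\}$ of $\mathbb{A}_n^m$ is a zero algebra, i.e. $I_rI_s=0$ for all $r,s\in\{m+1,\dots,n\}$. Then for every circle $C$ as described in the context, $\lambda:=\int_C\zeta^{-1}\,d\zeta=2\pi i$ (that is, $2\pi i$ times the unit $1$ of $\mathbb{A}_n^m$).
   Context: Fix natural numbers $m\le n$. $\mathbb{A}_n^m$ is a commutative associative algebra with unit over $\mathbb{C}$ with a basis $\{I_k\}_{k=1}^n$ satisfying: (1) for $r,s\in\{1,\dots,m\}$, $I_rI_s=0$ if $r\ne s$ and $I_rI_r=I_r$; (2) for $r,s\in\{m+1,\dots,n\}$, $I_rI_s=\sum_{k=\max\{r,s\}+1}^{n}\Upsilon^{s}_{r,k}I_k$ with constants $\Upsilon^s_{r,k}\in\mathbb{C}$; (3) for each $s\in\{m+1,\dots,n\}$ there is a unique $u_s\in\{1,\dots,m\}$ such that for $r\in\{1,\dots,m\}$, $I_rI_s=I_s$ if $r=u_s$ and $0$ otherwise. Unit $1=\sum_{u=1}^mI_u$; $\mathbb{A}_n^m=S\oplus_sN$ with $S=\mathrm{span}\{I_1,\dots,I_m\}$ semisimple and $N=\mathrm{span}\{I_{m+1},\dots,I_n\}$ nilpotent. $f_u(\sum_k\lambda_kI_k)=\lambda_u$. Let $e_1=1$, $e_2=\sum_ka_kI_k$, $e_3=\sum_kb_kI_k$ ($a_k,b_k\in\mathbb{C}$) be linearly independent over $\mathbb{R}$; $\zeta=xe_1+ye_2+ze_3$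 ($x,y,z\in\mathbb{R}$), $E_3$ their real span. Standing assumption: $f_u(E_3)=\mathbb{C}$ for all $u=1,\dots,m$. $\zeta$ is non-invertible exactly when $(x,y,z)$ lies on one of the lines $L_u=\{x+y\,\mathrm{Re}\,a_u+z\,\mathrm{Re}\,b_u=0,\ y\,\mathrm{Im}\,a_u+z\,\mathrm{Im}\,b_u=0\}$. The circle: $C\subset E_3$ is $C=\{xe_1+ye_2+ze_3:(x,y,z)\in C'\}$ for a Euclidean circle $C'\subset\mathbb{R}^3$ of radius $R>0$ centered at the origin, such that for every $u=1,\dots,m$ the image $f_u(C)$ is a positively oriented closed Jordan curve in $\mathbb{C}$ bounding a domain containing $0$ (so $C$ avoids $\bigcup_uL_u$). Integral: for a Jordan rectifiable curve $\gamma$ and continuous $\Psi=\sum_k(U_k+iV_k)I_k$ on $\gamma_\zeta$, $\int_{\gamma_\zeta}\Psi d\zeta:=\sum_kI_k\int_\gamma(U_k+iV_k)dx+\sum_ke_2I_k\int_\gamma(U_k+iV_k)dy+\sum_ke_3I_k\int_\gamma(U_k+iV_k)dz$. *)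

From Stdlib Require Import Reals Lra Arith ClassicalEpsilon.
From Coquelicot Require Import Coquelicot.
Open Scope R_scope.
Open Scope C_scope.

Fixpoint sumC (n : nat) (f : nat -> C) : C :=
  match n with
  | O => 0
  | S n' => sumC n' f + f n
  end.

(* An element of A_n^m is given by its coordinates in the basis I_1..I_n;
   we represent it as a function nat -> C whose relevant entries are 1..n. *)
Definition elt := nat -> C.

Definition ezero : elt := fun _ => 0.
Definition eadd (a b : elt) : elt := fun k => a k + b k.
Definition escal (c : C) (a : elt) : elt := fun k => c * a k.
Definition inrange (n k : nat) : bool := andb (1 <=? k)%nat (k <=? n)%nat.

Definition basis (r : nat) : elt := fun k => if Nat.eqb k r then 1 else 0.

Definition vec (n : nat) (c : nat -> C) : elt :=
  fun k => if inrange n k then c k else 0.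

(* Multiplication table of A_n^m:
   u s = u_s, Ups s r k = Upsilon^s_{r,k}. *)
Definition basis_mul (m n : nat) (u : nat -> nat) (Ups : nat -> nat -> nat -> C)
  (r s : nat) : elt :=
  if (r <=? m)%nat then
    if (s <=? m)%nat then (if Nat.eqb r s then basis r else ezero)
    else (if Nat.eqb r (u s) then basis s else ezero)
  else
    if (s <=? m)%nat then (if Nat.eqb s (u r) then basis r else ezero)
    else (fun k => if andb (Nat.max r s <? k)%nat (k <=? n)%nat then Ups s r k else 0).

Definition emul (m n : nat) (u : nat -> nat) (Ups : nat -> nat -> nat -> C)
  (a b : elt) : elt :=
  fun k => sumC n (fun r => sumC n (fun s => a r * b s * basis_mul m n u Ups r s k)).

Definition eone (m : nat) : elt := fun k => if inrange m k then 1 else 0.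

Definition fu (a : elt) (v : nat) : C := a v.

(* A (chosen) inverse of a, when a is invertible; junk value 0 otherwise. *)
Definition einv (m n : nat) (u : nat -> nat) (Ups : nat -> nat -> nat -> C)
  (a : elt) : elt :=
  match excluded_middle_informative (exists b, emul m n u Ups a b = eone m) with
  | left h => proj1_sig (constructive_indefinite_description _ h)
  | right _ => ezero
  end.

Definition CInt (f : R -> C) (lo hi : R) : C :=
  (RInt (fun t => fst (f t)) lo hi, RInt (fun t => snd (f t)) lo hi).

(* Line integral  int_gamma F dx_j  along a parametrized curve t in [0,2pi]
   whose j-th real coordinate is g; F is the integrand evaluated along the curve. *)
Definition line_int (F : R -> C) (g : R -> R) : C :=
  CInt (fun t => RtoC (Derive g t) * F t) 0 (2 * PI)%R.

(* The integral  int_{gamma_zeta} Psi dzeta  of the paper, for a curve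
   gamma(t) = (gx t, gy t, gz t), t in [0, 2 pi]:
   sum_k I_k int (Psi_k) dx + sum_k e2 I_k int (Psi_k) dy + sum_k e3 I_k int (Psi_k) dz. *)
Definition hyper_int (m n : nat) (u : nat -> nat) (Ups : nat -> nat -> nat -> C)
  (e2 e3 : elt) (Psi : R -> elt) (gx gy gz : R -> R) : elt :=
  fun k =>
    sumC n (fun j =>
      basis j k * line_int (fun t => Psi t j) gx
      + emul m n u Ups e2 (basis j) k * line_int (fun t => Psi t j) gy
      + emul m n u Ups e3 (basis j) k * line_int (fun t => Psi t j) gz).

(* zeta = x e1 + y e2 + z e3 with e1 = 1 *)
Definition zeta (m : nat) (e2 e3 : elt) (x y z : R) : elt :=
  eadd (escal (RtoC x) (eone m)) (eadd (escal (RtoC y) e2) (escal (RtoC z) e3)).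

Definition jordan_on (w : R -> C) : Prop :=
  forall s t, 0 <= s < 2 * PI -> 0 <= t < 2 * PI -> w s = w t -> s = t.

(* w is positively oriented around 0 with winding number 1: 0 is not on the
   curve and a continuous argument of w increases by exactly 2 pi. *)
Definition winds_once_positively (w : R -> C) : Prop :=
  (forall t, 0 <= t <= 2 * PI -> w t <> 0) /\
  exists theta : R -> R,
    (forall t, 0 <= t <= 2 * PI ->
        filterlim theta (within (fun s => 0 <= s <= 2 * PI) (locally t)) (locally (theta t))) /\
    (forall t, 0 <= t <= 2 * PI ->
        w t = RtoC (Cmod (w t)) * (cos (theta t), sin (theta t))) /\
    (theta (2 * PI) - theta 0 = 2 * PI)%R.

(* With N a zero algebra, multiplication reads (xy)_k = x_k y_k for k <= m and
   (xy)_k = x_(u_k) y_k + x_k y_(u_k) for k > m.  Hence along the circle zeta^-1 has coordinates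
   1/zeta_k and -zeta_k/zeta_(u_k)^2, and the k-th coordinate of the integral is the integral of
   zeta_k'/zeta_k for k <= m, and of (zeta_k/zeta_(u_k))' for k > m.  The latter vanishes because
   the circle is closed.  The former is the logarithmic integral of the closed curve f_k(C): its
   real part is the increment of ln |f_k|, namely 0, and its imaginary part is the increment 2 pi
   of the continuous argument theta. *)

From Stdlib Require Import Reals Lra Lia FunctionalExtensionality ClassicalEpsilon.
From Coquelicot Require Import Coquelicot.
Open Scope R_scope.
Open Scope C_scope.

Lemma sumC_eq0 n (f : nat -> C) :
  (forall i, (1 <= i <= n)%nat -> f i = 0) -> sumC n f = 0.
Proof.
  induction n as [|n IH]; intros H; simpl; [reflexivity|].
  rewrite IH, H by (lia || (intros; apply H; lia)). ring.
Qed.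

Lemma sumC_eq1 n (f : nat -> C) j : (1 <= j <= n)%nat ->
  (forall i, (1 <= i <= n)%nat -> i <> j -> f i = 0) -> sumC n f = f j.
Proof.
  induction n as [|n IH]; intros Hj H; [lia|]. simpl.
  destruct (Nat.eq_dec j (S n)) as [->|Hne].
  - rewrite sumC_eq0 by (intros; apply H; lia). ring.
  - rewrite IH, (H (S n)) by (lia || (intros; apply H; lia)). ring.
Qed.

Lemma sumC_eq2 n (f : nat -> C) j1 j2 : (1 <= j1 <= n)%nat -> (1 <= j2 <= n)%nat -> j1 <> j2 ->
  (forall i, (1 <= i <= n)%nat -> i <> j1 -> i <> j2 -> f i = 0) -> sumC n f = f j1 + f j2.
Proof.
  induction n as [|n IH]; intros Hj1 Hj2 Hne H; [lia|]. simpl.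
  destruct (Nat.eq_dec j1 (S n)) as [->|Hne1]; [|destruct (Nat.eq_dec j2 (S n)) as [->|Hne2]].
  - rewrite (sumC_eq1 n f j2) by (lia || (intros; apply H; lia)). ring.
  - rewrite (sumC_eq1 n f j1) by (lia || (intros; apply H; lia)). ring.
  - rewrite IH, (H (S n)) by (lia || (intros; apply H; lia)). ring.
Qed.

Lemma basis_diag k : basis k k = 1.
Proof. unfold basis. rewrite Nat.eqb_refl. reflexivity. Qed.

Lemma basis_offdiag j k : j <> k -> basis j k = 0.
Proof. intros H. unfold basis. destruct (Nat.eqb_spec k j); [lia|reflexivity]. Qed.

Lemma inrange_true n k : (1 <= k <= n)%nat -> inrange n k = true.
Proof. intros Hk. unfold inrange. apply andb_true_intro; split; apply Nat.leb_le; lia. Qed.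

Lemma inrange_false n k : ~ (1 <= k <= n)%nat -> inrange n k = false.
Proof.
  intros Hk. unfold inrange.
  destruct (Nat.leb_spec 1 k), (Nat.leb_spec k n); simpl; lia || reflexivity.
Qed.

Lemma eone_in m k : (1 <= k <= m)%nat -> eone m k = 1.
Proof. intros Hk. unfold eone. rewrite inrange_true by exact Hk. reflexivity. Qed.

Lemma eone_out m k : ~ (1 <= k <= m)%nat -> eone m k = 0.
Proof. intros Hk. unfold eone. rewrite inrange_false by exact Hk. reflexivity. Qed.

Lemma vec_in n c k : (1 <= k <= n)%nat -> vec n c k = c k.
Proof. intros Hk. unfold vec. rewrite inrange_true by exact Hk. reflexivity. Qed.

Lemma zeta_coord m n a b (x y z : R) k : (1 <= k <= n)%nat ->
  zeta m (vec n a) (vec n b) x y z k = RtoC x * eone m k + RtoC y * a k + RtoC z * b k.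
Proof. intros Hk. unfold zeta, eadd, escal. rewrite !vec_in by exact Hk. ring. Qed.

Ltac case_nat_tests :=
  repeat match goal with
  | |- context [Nat.leb ?a ?b] => destruct (Nat.leb_spec a b)
  | |- context [Nat.ltb ?a ?b] => destruct (Nat.ltb_spec a b)
  | |- context [Nat.eqb ?a ?b] => destruct (Nat.eqb_spec a b)
  end; simpl; try subst; try lia; try ring.

Lemma emul_basis m n u Ups r s k : (1 <= r <= n)%nat -> (1 <= s <= n)%nat ->
  emul m n u Ups (basis r) (basis s) k = basis_mul m n u Ups r s k.
Proof.
  intros Hr Hs. unfold emul.
  rewrite (sumC_eq1 n _ r Hr).
  2:{ intros i Hi Hir. apply sumC_eq0. intros j Hj. rewrite (basis_offdiag r i) by congruence. ring. }
  rewrite (sumC_eq1 n _ s Hs).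
  2:{ intros j Hj Hjs. rewrite (basis_offdiag s j) by congruence. ring. }
  rewrite !basis_diag. ring.
Qed.

Section ZeroRadical.
Variables (m n : nat) (u : nat -> nat) (Ups : nat -> nat -> nat -> C).
Hypothesis Hmn : (m <= n)%nat.
Hypothesis Hu : forall s, (m < s <= n)%nat -> (1 <= u s <= m)%nat.
Hypothesis Hzero : forall r s, (m < r <= n)%nat -> (m < s <= n)%nat ->
  emul m n u Ups (basis r) (basis s) = ezero.

Lemma basis_mul_eq0 r s k : (1 <= r <= n)%nat -> (1 <= s <= n)%nat ->
  ~ ((r = k /\ s = k /\ (k <= m)%nat) \/
     (m < k)%nat /\ (r = u k /\ s = k \/ r = k /\ s = u k)) ->
  basis_mul m n u Ups r s k = 0.
Proof.
  intros Hr Hs Hrs.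
  destruct (Nat.le_gt_cases r m), (Nat.le_gt_cases s m).
  - unfold basis_mul, basis, ezero. case_nat_tests.
  - assert (Hus := Hu s ltac:(lia)). unfold basis_mul, basis, ezero. case_nat_tests.
  - assert (Hur := Hu r ltac:(lia)). unfold basis_mul, basis, ezero. case_nat_tests.
  - rewrite <- emul_basis by assumption. rewrite Hzero by lia. reflexivity.
Qed.

Lemma emul_coord_semisimple x y k : (1 <= k <= m)%nat -> emul m n u Ups x y k = x k * y k.
Proof.
  intros Hk. unfold emul.
  rewrite (sumC_eq1 n _ k) by (lia || (intros i Hi Hik; apply sumC_eq0; intros j Hj;
    rewrite basis_mul_eq0 by (auto; lia); ring)).
  rewrite (sumC_eq1 n _ k) by (lia || (intros j Hj Hjk; rewrite basis_mul_eq0 by (auto; lia); ring)).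
  unfold basis_mul, basis. case_nat_tests.
Qed.

Lemma emul_coord_radical x y k : (m < k <= n)%nat ->
  emul m n u Ups x y k = x (u k) * y k + x k * y (u k).
Proof.
  intros Hk. assert (Huk := Hu k Hk). unfold emul.
  rewrite (sumC_eq2 n _ (u k) k) by (lia || (intros i Hi H1 H2; apply sumC_eq0; intros j Hj;
    rewrite basis_mul_eq0 by (auto; lia); ring)).
  rewrite (sumC_eq1 n _ k), (sumC_eq1 n _ (u k))
    by (lia || (intros j Hj Hjk; rewrite basis_mul_eq0 by (auto; lia); ring)).
  unfold basis_mul, basis. case_nat_tests.
Qed.

Lemma emul_coord_out x y k : ~ (1 <= k <= n)%nat -> emul m n u Ups x y k = 0.
Proof.
  intros Hk. apply sumC_eq0. intros i Hi. apply sumC_eq0. intros j Hj.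
  rewrite basis_mul_eq0 by (auto; lia). ring.
Qed.


Section Inverse.
Variable x : elt.
Hypothesis x_unit : forall v, (1 <= v <= m)%nat -> x v <> 0.

Lemma emul_has_inverse : exists y, emul m n u Ups x y = eone m.
Proof.
  exists (fun k => if (k <=? m)%nat then / x k else - x k / (x (u k) * x (u k))).
  apply functional_extensionality. intros k.
  destruct (Nat.le_gt_cases 1 k); [destruct (Nat.le_gt_cases k m); [|destruct (Nat.le_gt_cases k n)]|].
  - rewrite emul_coord_semisimple, eone_in by lia.
    destruct (Nat.leb_spec k m); [|lia]. field. apply x_unit. lia.
  - assert (Huk := Hu k ltac:(lia)).
    rewrite emul_coord_radical, eone_out by lia.
    destruct (Nat.leb_spec k m); [lia|]. destruct (Nat.leb_spec (u k) m); [|lia].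
    field. apply x_unit. lia.
  - rewrite emul_coord_out, eone_out by lia. reflexivity.
  - rewrite emul_coord_out, eone_out by lia. reflexivity.
Qed.

Lemma emul_einv : emul m n u Ups x (einv m n u Ups x) = eone m.
Proof.
  unfold einv. destruct excluded_middle_informative as [h|h].
  - exact (proj2_sig (constructive_indefinite_description _ h)).
  - contradiction (h emul_has_inverse).
Qed.

Lemma einv_coord_semisimple k : (1 <= k <= m)%nat -> einv m n u Ups x k = / x k.
Proof.
  intros Hk. assert (E := f_equal (fun f => f k) emul_einv). simpl in E.
  rewrite emul_coord_semisimple, eone_in in E by lia.
  assert (Hx := x_unit k Hk).
  replace (einv m n u Ups x k) with (/ x k * (x k * einv m n u Ups x k)) by (field; exact Hx).
  rewrite E. ring.
Qed.

Lemma einv_coord_radical k : (m < k <= n)%nat ->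
  einv m n u Ups x k = - x k / (x (u k) * x (u k)).
Proof.
  intros Hk. assert (Huk := Hu k Hk). assert (Hx := x_unit (u k) Huk).
  assert (E := f_equal (fun f => f k) emul_einv). simpl in E.
  rewrite emul_coord_radical, eone_out, (einv_coord_semisimple (u k)) in E by lia.
  replace (einv m n u Ups x k) with
    (/ x (u k) * ((x (u k) * einv m n u Ups x k + x k * / x (u k)) - x k * / x (u k)))
    by (field; exact Hx).
  rewrite E. field. exact Hx.
Qed.

End Inverse.
End ZeroRadical.

Definition line_int3 (F : R -> C) (gx gy gz : R -> R) (c1 c2 c3 : C) : C :=
  c1 * line_int F gx + c2 * line_int F gy + c3 * line_int F gz.

Section HyperIntCoords.
Variables (m n : nat) (u : nat -> nat) (Ups : nat -> nat -> nat -> C).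
Hypothesis Hmn : (m <= n)%nat.
Hypothesis Hu : forall s, (m < s <= n)%nat -> (1 <= u s <= m)%nat.
Hypothesis Hzero : forall r s, (m < r <= n)%nat -> (m < s <= n)%nat ->
  emul m n u Ups (basis r) (basis s) = ezero.
Variables (e2 e3 : elt) (Psi : R -> elt) (gx gy gz : R -> R).

Let hyper_term (k j : nat) : C :=
  line_int3 (fun t => Psi t j) gx gy gz
    (basis j k) (emul m n u Ups e2 (basis j) k) (emul m n u Ups e3 (basis j) k).

Lemma hyper_int_sum k : hyper_int m n u Ups e2 e3 Psi gx gy gz k = sumC n (hyper_term k).
Proof. reflexivity. Qed.

Lemma hyper_int_coord_semisimple k : (1 <= k <= m)%nat ->
  hyper_int m n u Ups e2 e3 Psi gx gy gz k =
  line_int3 (fun t => Psi t k) gx gy gz 1 (e2 k) (e3 k).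
Proof.
  intros Hk. rewrite hyper_int_sum, (sumC_eq1 n _ k); [|lia|].
  - unfold hyper_term. rewrite !emul_coord_semisimple, basis_diag by assumption. f_equal; ring.
  - intros j Hj Hjk. unfold hyper_term, line_int3.
    rewrite !emul_coord_semisimple, basis_offdiag by assumption. ring.
Qed.

Lemma hyper_int_coord_radical k : (m < k <= n)%nat ->
  hyper_int m n u Ups e2 e3 Psi gx gy gz k =
  line_int3 (fun t => Psi t k) gx gy gz 1 (e2 (u k)) (e3 (u k)) +
  line_int3 (fun t => Psi t (u k)) gx gy gz 0 (e2 k) (e3 k).
Proof.
  intros Hk. assert (Huk := Hu k Hk).
  rewrite hyper_int_sum, (sumC_eq2 n _ k (u k)); [|lia|lia|lia|].
  - unfold hyper_term. rewrite !emul_coord_radical by assumption.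
    rewrite !basis_diag, (basis_offdiag k (u k)), (basis_offdiag (u k) k) by lia.
    unfold line_int3. ring.
  - intros j Hj Hjk Hjuk. unfold hyper_term, line_int3.
    rewrite !emul_coord_radical by assumption. rewrite !basis_offdiag by assumption. ring.
Qed.

Lemma hyper_int_coord_out k : ~ (1 <= k <= n)%nat ->
  hyper_int m n u Ups e2 e3 Psi gx gy gz k = 0.
Proof.
  intros Hk. rewrite hyper_int_sum. apply sumC_eq0. intros j Hj. unfold hyper_term, line_int3.
  rewrite !emul_coord_out, basis_offdiag by (assumption || lia). ring.
Qed.

End HyperIntCoords.

Definition is_Cderive (f : R -> C) (t : R) (l : C) : Prop :=
  is_derive (fun s => fst (f s)) t (fst l) /\ is_derive (fun s => snd (f s)) t (snd l).

Definition Ccontinuous (f : R -> C) (t : R) : Prop :=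
  continuous (fun s => fst (f s)) t /\ continuous (fun s => snd (f s)) t.

Ltac Rring := match goal with |- ?x = ?y => change (@eq R x y) end; ring.

Ltac rewrite_Derive :=
  repeat match goal with |- context [Derive ?f ?x] =>
    rewrite (is_derive_unique f x _ ltac:(eauto)) end.

Lemma is_derive_eq (f : R -> R) (t l l' : R) : is_derive f t l -> l = l' -> is_derive f t l'.
Proof. intros H <-. exact H. Qed.

Lemma is_derive_div_sumsq (h f1 f2 : R -> R) (t dh d1 d2 : R) :
  is_derive h t dh -> is_derive f1 t d1 -> is_derive f2 t d2 ->
  (0 < f1 t ^ 2 + f2 t ^ 2)%R ->
  is_derive (fun s => h s / (f1 s ^ 2 + f2 s ^ 2))%R t
    ((dh * (f1 t ^ 2 + f2 t ^ 2) - h t * (2 * f1 t * d1 + 2 * f2 t * d2))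
       / (f1 t ^ 2 + f2 t ^ 2) ^ 2)%R.
Proof.
  intros Hh H1 H2 Hpos. auto_derive.
  - repeat split; try (eexists; eassumption). simpl in Hpos. lra.
  - rewrite_Derive. simpl in Hpos. field. lra.
Qed.

Lemma Cnorm2_pos (c : C) : c <> 0 -> (0 < fst c ^ 2 + snd c ^ 2)%R.
Proof.
  intros Hc. apply Cmod_gt_0 in Hc. unfold Cmod in Hc.
  destruct (Rle_or_lt (fst c ^ 2 + snd c ^ 2) 0) as [H|H]; [|exact H].
  rewrite sqrt_neg_0 in Hc by exact H. lra.
Qed.

Lemma is_Cderive_eq (f : R -> C) (t : R) (l l' : C) : is_Cderive f t l -> l = l' -> is_Cderive f t l'.
Proof. intros H <-. exact H. Qed.

Section ComplexCalculus.
Variables (f g : R -> C) (t : R) (df dg : C).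

Lemma is_Cderive_const (c : C) : is_Cderive (fun _ => c) t 0.
Proof. split; (eapply is_derive_eq; [apply (is_derive_const (K := R_AbsRing))|reflexivity]). Qed.

Lemma is_Cderive_RtoC (x : R -> R) (dx : R) :
  is_derive x t dx -> is_Cderive (fun s => RtoC (x s)) t (RtoC dx).
Proof.
  intros H. split; simpl; [exact H|].
  eapply is_derive_eq; [apply (is_derive_const (K := R_AbsRing))|reflexivity].
Qed.

Hypothesis f_derive : is_Cderive f t df.
Hypothesis g_derive : is_Cderive g t dg.

Lemma is_Cderive_plus : is_Cderive (fun s => f s + g s) t (df + dg).
Proof.
  destruct f_derive, g_derive.
  split; simpl; (eapply is_derive_eq;
    [apply (is_derive_plus (V := R_NormedModule)); eassumption | reflexivity]).
Qed.

Lemma is_Cderive_mult : is_Cderive (fun s => f s * g s) t (df * g t + f t * dg).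
Proof.
  destruct f_derive, g_derive.
  split; simpl; eapply is_derive_eq.
  - apply (is_derive_minus (V := R_NormedModule)); apply (is_derive_mult (K := R_AbsRing));
      (eassumption || exact Rmult_comm).
  - cbv beta. unfold minus, plus, mult, opp; simpl. ring.
  - apply (is_derive_plus (V := R_NormedModule)); apply (is_derive_mult (K := R_AbsRing));
      (eassumption || exact Rmult_comm).
  - cbv beta. unfold plus, mult; simpl. ring.
Qed.

Lemma is_Cderive_inv : f t <> 0 -> is_Cderive (fun s => / f s) t (- df / (f t * f t)).
Proof.
  intros Hf. assert (Hnz := Cnorm2_pos _ Hf). destruct f_derive as [H1 H2].
  split; simpl; eapply is_derive_eq.
  - apply (is_derive_div_sumsq (fun s => fst (f s))); eassumption.
  - cbv beta. set (a := fst (f t)) in *. set (b := snd (f t)) in *. simpl in Hnz.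
    field. repeat split; intro; nra.
  - apply (is_derive_div_sumsq (fun s => - snd (f s))%R); try eassumption.
    apply (is_derive_opp (V := R_NormedModule)). exact H2.
  - cbv beta. set (a := fst (f t)) in *. set (b := snd (f t)) in *. simpl in Hnz.
    unfold opp; simpl. field. repeat split; intro; nra.
Qed.

End ComplexCalculus.

Lemma Ccontinuous_of_is_Cderive (f : R -> C) (t : R) (l : C) :
  is_Cderive f t l -> Ccontinuous f t.
Proof.
  intros [H1 H2].
  split; apply (ex_derive_continuous (K := R_AbsRing) (V := R_NormedModule)); eexists; eassumption.
Qed.

Lemma Ccontinuous_RtoC (x : R -> R) (t : R) : continuous x t -> Ccontinuous (fun s => RtoC (x s)) t.
Proof. intros H. split; [exact H|apply continuous_const]. Qed.

Lemma Ccontinuous_const (c : C) (t : R) : Ccontinuous (fun _ => c) t.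
Proof. split; apply continuous_const. Qed.

Lemma Ccontinuous_plus (f g : R -> C) (t : R) :
  Ccontinuous f t -> Ccontinuous g t -> Ccontinuous (fun s => f s + g s) t.
Proof.
  intros [F1 F2] [G1 G2]. split; apply (continuous_plus (V := R_NormedModule)); assumption.
Qed.

Lemma Ccontinuous_opp (f : R -> C) (t : R) : Ccontinuous f t -> Ccontinuous (fun s => - f s) t.
Proof. intros [F1 F2]. split; apply (continuous_opp (V := R_NormedModule)); assumption. Qed.

Lemma Ccontinuous_mult (f g : R -> C) (t : R) :
  Ccontinuous f t -> Ccontinuous g t -> Ccontinuous (fun s => f s * g s) t.
Proof.
  intros [F1 F2] [G1 G2]. split; simpl.
  - apply (continuous_minus (V := R_NormedModule)); apply (continuous_mult (K := R_AbsRing)); assumption.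
  - apply (continuous_plus (V := R_NormedModule)); apply (continuous_mult (K := R_AbsRing)); assumption.
Qed.

Lemma Ccontinuous_inv (f : R -> C) (t : R) (df : C) :
  is_Cderive f t df -> f t <> 0 -> Ccontinuous (fun s => / f s) t.
Proof. intros Hf Hf0. eapply Ccontinuous_of_is_Cderive, is_Cderive_inv; eassumption. Qed.

Lemma Ccontinuous_opp_div_sqr (f g : R -> C) (t : R) (df dg : C) :
  is_Cderive f t df -> is_Cderive g t dg -> g t <> 0 ->
  Ccontinuous (fun s => - f s / (g s * g s)) t.
Proof.
  intros Hf Hg Hg0. apply Ccontinuous_mult.
  - apply Ccontinuous_opp. eapply Ccontinuous_of_is_Cderive, Hf.
  - eapply Ccontinuous_inv; [apply is_Cderive_mult; eassumption|]. apply Cmult_neq_0; exact Hg0.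
Qed.

Lemma CInt_ext (f g : R -> C) (a b : R) : (forall t, f t = g t) -> CInt f a b = CInt g a b.
Proof. intros H. unfold CInt. f_equal; apply RInt_ext; intros t _; rewrite H; reflexivity. Qed.

Lemma RInt_lin2 (f g : R -> R) (a b al be : R) : ex_RInt f a b -> ex_RInt g a b ->
  RInt (fun t => al * f t + be * g t)%R a b = (al * RInt f a b + be * RInt g a b)%R.
Proof.
  intros Hf Hg. apply is_RInt_unique.
  apply (is_RInt_plus (V := R_NormedModule) (fun t => al * f t)%R (fun t => be * g t)%R);
    apply (is_RInt_scal (V := R_NormedModule)); apply (RInt_correct (V := R_CompleteNormedModule));
    assumption.
Qed.

Section ComplexIntegral.
Variables (a b : R).

Lemma ex_RInt_Ccontinuous (f : R -> C) : (forall t, Ccontinuous f t) ->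
  ex_RInt (fun t => fst (f t)) a b /\ ex_RInt (fun t => snd (f t)) a b.
Proof.
  intros H. split; apply (ex_RInt_continuous (V := R_CompleteNormedModule)); intros t _; apply H.
Qed.

Lemma CInt_plus (f g : R -> C) : (forall t, Ccontinuous f t) -> (forall t, Ccontinuous g t) ->
  CInt (fun t => f t + g t) a b = CInt f a b + CInt g a b.
Proof.
  intros Hf Hg. destruct (ex_RInt_Ccontinuous f Hf), (ex_RInt_Ccontinuous g Hg).
  unfold CInt. apply injective_projections; simpl.
  - rewrite (RInt_ext _ (fun t => 1 * fst (f t) + 1 * fst (g t))%R), RInt_lin2
      by (assumption || (intros; Rring)).
    Rring.
  - rewrite (RInt_ext _ (fun t => 1 * snd (f t) + 1 * snd (g t))%R), RInt_lin2
      by (assumption || (intros; Rring)).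
    Rring.
Qed.

Lemma CInt_scal (c : C) (f : R -> C) : (forall t, Ccontinuous f t) ->
  CInt (fun t => c * f t) a b = c * CInt f a b.
Proof.
  intros Hf. destruct (ex_RInt_Ccontinuous f Hf).
  unfold CInt. apply injective_projections; simpl.
  - rewrite (RInt_ext _ (fun t => fst c * fst (f t) + (- snd c) * snd (f t))%R), RInt_lin2
      by (assumption || (intros; Rring)).
    Rring.
  - rewrite RInt_lin2 by assumption. Rring.
Qed.

Lemma CInt_derive (f df : R -> C) : (forall t, is_Cderive f t (df t)) ->
  (forall t, Ccontinuous df t) -> CInt df a b = f b - f a.
Proof.
  intros Hd Hc. unfold CInt. apply injective_projections; simpl; apply is_RInt_unique.
  - apply (is_RInt_derive (fun s => fst (f s))); intros t _; [apply Hd|apply Hc].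
  - apply (is_RInt_derive (fun s => snd (f s))); intros t _; [apply Hd|apply Hc].
Qed.

Lemma CInt_dquotient (f g df dg : R -> C) :
  (forall t, is_Cderive f t (df t)) -> (forall t, is_Cderive g t (dg t)) ->
  (forall t, Ccontinuous df t) -> (forall t, Ccontinuous dg t) -> (forall t, g t <> 0) ->
  CInt (fun t => dg t * (- f t / (g t * g t))) a b + CInt (fun t => df t * / g t) a b
  = f b / g b - f a / g a.
Proof.
  intros Hf Hg Hdf Hdg Hg0.
  assert (Hinv : forall t, Ccontinuous (fun s => / g s) t) by (intros; eapply Ccontinuous_inv; auto).
  rewrite <- CInt_plus.
  - rewrite (CInt_ext _ (fun t => df t * / g t + f t * (- dg t / (g t * g t))))
      by (intros; unfold Cdiv; ring).
    apply (CInt_derive (fun t => f t / g t)).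
    + intros t. apply is_Cderive_mult; [apply Hf|apply is_Cderive_inv; auto].
    + intros t. apply Ccontinuous_plus; apply Ccontinuous_mult; auto.
      * eapply Ccontinuous_of_is_Cderive, Hf.
      * unfold Cdiv. apply Ccontinuous_mult; [apply Ccontinuous_opp, Hdg|].
        eapply Ccontinuous_inv; [apply is_Cderive_mult; apply Hg|apply Cmult_neq_0; apply Hg0].
  - intros t. apply Ccontinuous_mult; [apply Hdg|eapply Ccontinuous_opp_div_sqr; auto].
  - intros t. apply Ccontinuous_mult; auto.
Qed.

End ComplexIntegral.

Lemma is_derive_ln_norm (f1 f2 : R -> R) (t d1 d2 : R) :
  is_derive f1 t d1 -> is_derive f2 t d2 -> (0 < f1 t ^ 2 + f2 t ^ 2)%R ->
  is_derive (fun s => ln (sqrt (f1 s ^ 2 + f2 s ^ 2))) t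
    ((f1 t * d1 + f2 t * d2) / (f1 t ^ 2 + f2 t ^ 2))%R.
Proof.
  intros H1 H2 Hpos. assert (Hsq := sqrt_lt_R0 _ Hpos). auto_derive.
  - repeat split; try (eexists; eassumption); simpl in *; nra.
  - rewrite_Derive.
    simpl in Hpos, Hsq |- *. set (S := (f1 t * (f1 t * 1) + f2 t * (f2 t * 1))%R) in *.
    assert (HS : S = (sqrt S * sqrt S)%R) by (rewrite sqrt_sqrt; lra).
    set (r := sqrt S) in *. rewrite HS. field. lra.
Qed.

Lemma is_derive_zero_const (f : R -> R) (a t : R) : (forall s, is_derive f s 0%R) -> f t = f a.
Proof.
  intros Hd.
  assert (H := is_RInt_derive f (fun _ => 0%R) a t (fun s _ => Hd s) (fun s _ => continuous_const _ s)).
  apply is_RInt_unique in H. rewrite RInt_const in H.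
  unfold scal, minus, plus, opp in H; simpl in H. unfold mult in H; simpl in H. lra.
Qed.

Lemma linear_ode_zero (X H h : R -> R) (a t : R) :
  (forall s, is_derive X s (h s * X s)%R) -> (forall s, is_derive H s (h s)) ->
  X a = 0%R -> X t = 0%R.
Proof.
  intros HX HH Ha.
  assert (Hc : (X t * exp (- H t) = X a * exp (- H a))%R).
  { apply (is_derive_zero_const (fun s => X s * exp (- H s))%R). intros s. auto_derive.
    - repeat split; eexists; eauto.
    - rewrite_Derive. Rring. }
  rewrite Ha, Rmult_0_l in Hc. apply Rmult_integral in Hc as [Hc|Hc]; [exact Hc|].
  exfalso. exact (Rgt_not_eq _ _ (exp_pos _) Hc).
Qed.

Definition clamp (a b t : R) : R := Rmin b (Rmax a t).

Section Clamp.
Variables (a b : R).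
Hypothesis Hab : (a <= b)%R.

Lemma clamp_id t : (a <= t <= b)%R -> clamp a b t = t.
Proof. intros H. unfold clamp, Rmin, Rmax. repeat destruct Rle_dec; lra. Qed.

Lemma clamp_in t : (a <= clamp a b t <= b)%R.
Proof. unfold clamp, Rmin, Rmax. repeat destruct Rle_dec; lra. Qed.

Lemma clamp_lipschitz t s : (Rabs (clamp a b t - clamp a b s) <= Rabs (t - s))%R.
Proof.
  unfold clamp, Rmin, Rmax. repeat destruct Rle_dec; unfold Rabs; repeat destruct Rcase_abs; lra.
Qed.

Lemma continuity_clamp_comp (f : R -> R) :
  (forall t, (a <= t <= b)%R ->
     filterlim f (within (fun s => a <= s <= b)%R (locally t)) (locally (f t))) ->
  continuity (fun t => f (clamp a b t)).
Proof.
  intros Hf x. apply continuity_pt_filterlim.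
  eapply filterlim_comp; [|apply (Hf (clamp a b x) (clamp_in x))].
  intros P [eps HP]. exists eps. intros y Hy. apply HP; [|apply clamp_in].
  unfold ball in *; simpl in *. unfold AbsRing_ball, abs, minus, plus, opp in *; simpl in *.
  eapply Rle_lt_trans; [apply clamp_lipschitz|exact Hy].
Qed.

End Clamp.

Lemma sin_eq0_const (D : R -> R) (a b : R) : (a <= b)%R ->
  (forall t, (a <= t <= b)%R ->
     filterlim D (within (fun s => a <= s <= b)%R (locally t)) (locally (D t))) ->
  (forall t, (a <= t <= b)%R -> sin (D t) = 0%R) -> D a = 0%R -> D b = 0%R.
Proof.
  intros Hab Hc Hs Ha. destruct (Req_dec (D b) 0) as [Hb|Hb]; [exact Hb|exfalso].
  assert (HPI := PI_RGT_0).
  set (y := Rmax (- (PI / 2)) (Rmin (PI / 2) (D b))).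
  assert (Hy : (- (PI / 2) <= y <= PI / 2 /\ y <> 0)%R).
  { unfold y, Rmin, Rmax. repeat destruct Rle_dec; lra. }
  destruct (IVT_gen (fun t => D (clamp a b t)) a b y (continuity_clamp_comp a b Hab D Hc))
    as [x [Hx Hxy]].
  { rewrite !clamp_id by lra. rewrite Ha. unfold y, Rmin, Rmax. repeat destruct Rle_dec; lra. }
  assert (Hx' : (a <= x <= b)%R) by (revert Hx; unfold Rmin, Rmax; repeat destruct Rle_dec; lra).
  rewrite clamp_id in Hxy by exact Hx'.
  assert (Hsy := Hs x Hx'). rewrite Hxy in Hsy.
  destruct (Rlt_or_le 0 y).
  - assert (Hpos : (0 < sin y)%R) by (apply sin_gt_0; lra). lra.
  - assert (Hpos : (0 < sin (- y))%R) by (apply sin_gt_0; lra). rewrite sin_neg in Hpos. lra.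
Qed.

Definition cis (x : R) : C := (cos x, sin x).

Lemma is_Cderive_cis_comp (phi : R -> R) (t dphi : R) :
  is_derive phi t dphi -> is_Cderive (fun s => cis (phi s)) t (Ci * RtoC dphi * cis (phi t)).
Proof.
  intros H. split; simpl; auto_derive; try (eexists; eassumption);
    rewrite_Derive; Rring.
Qed.

Section LogarithmicDerivative.
Variables (w dw : R -> C).
Hypothesis w_derive : forall t, is_Cderive w t (dw t).
Hypothesis dw_cont : forall t, Ccontinuous dw t.
Hypothesis w_neq0 : forall t, w t <> 0.

Lemma Ccontinuous_dlog t : Ccontinuous (fun s => dw s / w s) t.
Proof.
  apply Ccontinuous_mult; [apply dw_cont|].
  eapply Ccontinuous_of_is_Cderive. apply is_Cderive_inv; [apply w_derive|apply w_neq0].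
Qed.

Lemma is_derive_ln_Cmod t : is_derive (fun s => ln (Cmod (w s))) t (fst (dw t / w t)).
Proof.
  destruct (w_derive t) as [H1 H2]. assert (Hpos := Cnorm2_pos _ (w_neq0 t)).
  eapply is_derive_eq;
    [apply (is_derive_ln_norm (fun s => fst (w s)) (fun s => snd (w s))); eassumption|].
  simpl. field. simpl in Hpos. lra.
Qed.

Lemma RInt_dlog_fst a b : RInt (fun t => fst (dw t / w t)) a b = (ln (Cmod (w b)) - ln (Cmod (w a)))%R.
Proof.
  apply is_RInt_unique. apply (is_RInt_derive (fun s => ln (Cmod (w s)))); intros t _.
  - apply is_derive_ln_Cmod.
  - apply (Ccontinuous_dlog t).
Qed.

Section ContinuousArgument.
Variables (a b : R) (theta : R -> R).
Hypothesis Hab : (a <= b)%R.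
Hypothesis theta_cont : forall t, (a <= t <= b)%R ->
  filterlim theta (within (fun s => a <= s <= b)%R (locally t)) (locally (theta t)).
Hypothesis w_polar : forall t, (a <= t <= b)%R ->
  w t = RtoC (Cmod (w t)) * (cos (theta t), sin (theta t)).

Let arg_int (t : R) : R := RInt (fun s => snd (dw s / w s)) a t.

Lemma is_derive_arg_int t : is_derive arg_int t (snd (dw t / w t)).
Proof.
  apply (is_derive_RInt (fun s => snd (dw s / w s)) arg_int a t);
    [apply filter_forall; intros c|apply Ccontinuous_dlog].
  apply (RInt_correct (V := R_CompleteNormedModule)),
    (ex_RInt_continuous (V := R_CompleteNormedModule)).
  intros s _. apply Ccontinuous_dlog.
Qed.

Let unwound (t : R) : C := w t * cis (- arg_int t).

Lemma is_Cderive_unwound t : is_Cderive unwound t (RtoC (fst (dw t / w t)) * unwound t).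
Proof.
  eapply is_Cderive_eq.
  - apply is_Cderive_mult; [apply w_derive|].
    apply (is_Cderive_cis_comp (fun s => - arg_int s)%R).
    apply (is_derive_opp (V := R_NormedModule) arg_int), is_derive_arg_int.
  - unfold unwound. assert (Hw := w_neq0 t).
    set (q := dw t / w t). assert (Hq : dw t = q * w t) by (unfold q; field; exact Hw).
    rewrite Hq. clearbody q. destruct q as [q1 q2], (w t) as [w1 w2], (cis (- arg_int t)) as [c1 c2].
    unfold Ci, RtoC, opp; apply injective_projections; simpl; ring.
Qed.

(* Since unwound' = Re (w'/w) unwound, X t := Im (unwound t * conj (unwound a)) solves
   X' = Re (w'/w) X with X a = 0; with w = |w| e^(i theta), X t = 0 says that
   theta - arg_int stays constant modulo pi. *)
Lemma unwound_cross_eq0 t : snd (unwound t * Cconj (unwound a)) = 0%R.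
Proof.
  apply (linear_ode_zero (fun s => snd (unwound s * Cconj (unwound a)))
           (fun s => ln (Cmod (w s))) (fun s => fst (dw s / w s)) a t);
    [intros s | exact is_derive_ln_Cmod | ].
  - destruct (is_Cderive_mult _ _ s _ _ (is_Cderive_unwound s)
                (is_Cderive_const s (Cconj (unwound a)))) as [_ H].
    eapply is_derive_eq; [exact H|].
    destruct (unwound s) as [z1 z2], (unwound a) as [y1 y2], (dw s / w s) as [q1 q2].
    simpl. ring.
  - destruct (unwound a) as [y1 y2]. simpl. ring.
Qed.

Lemma sin_arg_drift_eq0 t : (a <= t <= b)%R ->
  sin ((theta t - arg_int t) - (theta a - arg_int a)) = 0%R.
Proof.
  intros Ht. assert (Ha : (a <= a <= b)%R) by lra.
  assert (H := unwound_cross_eq0 t). unfold unwound in H.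
  rewrite (w_polar t Ht), (w_polar a Ha) in H.
  assert (Hr := proj1 (Cmod_gt_0 _) (w_neq0 t)). assert (Hr0 := proj1 (Cmod_gt_0 _) (w_neq0 a)).
  set (r := Cmod (w t)) in *. set (r0 := Cmod (w a)) in *.
  replace (snd _) with (r * r0 * sin ((theta t - arg_int t) - (theta a - arg_int a)))%R in H.
  - apply Rmult_integral in H as [H|H]; [|exact H].
    apply Rmult_integral in H as [H|H]; lra.
  - unfold cis. simpl. rewrite !sin_minus, !cos_minus, !cos_neg, !sin_neg. ring.
Qed.

Lemma RInt_dlog_snd : RInt (fun t => snd (dw t / w t)) a b = (theta b - theta a)%R.
Proof.
  set (c := (arg_int a - theta a)%R).
  assert (Hd : (theta b + (- arg_int b + c) = 0)%R).
  { apply (sin_eq0_const (fun t => theta t + (- arg_int t + c))%R a b Hab).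
    - intros t Ht. apply (filterlim_comp_2 (G := locally (theta t)) (H := locally (- arg_int t + c)%R)
             theta (fun s => - arg_int s + c)%R Rplus);
        [exact (theta_cont t Ht)| |exact (filterlim_plus (V := R_NormedModule) _ _)].
      eapply filterlim_filter_le_1; [apply filter_le_within|].
      apply (continuous_plus (V := R_NormedModule) (fun s => - arg_int s)%R (fun _ => c));
        [|apply continuous_const].
      apply (continuous_opp (V := R_NormedModule) arg_int),
        (ex_derive_continuous (K := R_AbsRing) (V := R_NormedModule)).
      eexists. apply is_derive_arg_int.
    - intros t Ht. rewrite <- (sin_arg_drift_eq0 t Ht). f_equal. unfold c. ring.
    - unfold c. ring. }
  assert (H0 : arg_int a = 0%R) by apply (RInt_point (V := R_CompleteNormedModule)).
  unfold c in Hd. fold (arg_int b). lra.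
Qed.

End ContinuousArgument.

Lemma CInt_dlog_winding : w 0%R = w (2 * PI)%R -> winds_once_positively w ->
  CInt (fun t => dw t / w t) 0 (2 * PI) = 2 * RtoC PI * Ci.
Proof.
  intros Hclosed [_ [theta [Hcont [Hpolar Hturn]]]].
  assert (H2PI : (0 <= 2 * PI)%R) by (pose proof PI_RGT_0; lra).
  unfold CInt.
  rewrite RInt_dlog_fst, (RInt_dlog_snd 0 (2 * PI) theta H2PI Hcont Hpolar), Hturn, Hclosed.
  unfold Ci, RtoC. apply injective_projections; simpl; ring.
Qed.

End LogarithmicDerivative.

Definition curve3 (x y z : R -> R) (c1 c2 c3 : C) (t : R) : C :=
  RtoC (x t) * c1 + RtoC (y t) * c2 + RtoC (z t) * c3.

Ltac Ccontinuity :=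
  repeat match goal with
  | |- Ccontinuous (fun _ => ?c) _ => apply Ccontinuous_const
  | |- Ccontinuous (fun s => _ + _) _ => apply Ccontinuous_plus
  | |- Ccontinuous (fun s => _ * _) _ => apply Ccontinuous_mult
  | |- Ccontinuous (fun s => RtoC _) _ => apply Ccontinuous_RtoC
  end; auto.

Lemma line_int3_ext (F G : R -> C) (gx gy gz : R -> R) (c1 c2 c3 : C) : (forall t, F t = G t) ->
  line_int3 F gx gy gz c1 c2 c3 = line_int3 G gx gy gz c1 c2 c3.
Proof.
  intros H. unfold line_int3, line_int.
  rewrite !(CInt_ext (fun t => RtoC (Derive _ t) * F t) (fun t => RtoC (Derive _ t) * G t))
    by (intros; rewrite H; reflexivity).
  reflexivity.
Qed.

Section SpaceCurve.
Variables (x y z dx dy dz : R -> R).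
Hypothesis x_derive : forall t, is_derive x t (dx t).
Hypothesis y_derive : forall t, is_derive y t (dy t).
Hypothesis z_derive : forall t, is_derive z t (dz t).
Hypothesis dx_cont : forall t, continuous dx t.
Hypothesis dy_cont : forall t, continuous dy t.
Hypothesis dz_cont : forall t, continuous dz t.

Lemma is_Cderive_curve3 (c1 c2 c3 : C) (t : R) :
  is_Cderive (curve3 x y z c1 c2 c3) t (curve3 dx dy dz c1 c2 c3 t).
Proof.
  eapply is_Cderive_eq.
  - apply is_Cderive_plus; [apply is_Cderive_plus|];
      (apply is_Cderive_mult; [apply is_Cderive_RtoC; auto | apply is_Cderive_const]).
  - unfold curve3. ring.
Qed.

Lemma Ccontinuous_curve3 (c1 c2 c3 : C) (t : R) : Ccontinuous (curve3 dx dy dz c1 c2 c3) t.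
Proof. unfold curve3. Ccontinuity. Qed.

Lemma line_int3_eq_CInt (F : R -> C) (c1 c2 c3 : C) : (forall t, Ccontinuous F t) ->
  line_int3 F x y z c1 c2 c3 = CInt (fun t => curve3 dx dy dz c1 c2 c3 t * F t) 0 (2 * PI).
Proof.
  intros HF. unfold line_int3, line_int.
  rewrite (CInt_ext (fun t => RtoC (Derive x t) * F t) (fun t => RtoC (dx t) * F t)),
    (CInt_ext (fun t => RtoC (Derive y t) * F t) (fun t => RtoC (dy t) * F t)),
    (CInt_ext (fun t => RtoC (Derive z t) * F t) (fun t => RtoC (dz t) * F t))
    by (intros; rewrite_Derive; reflexivity).
  rewrite <- !CInt_scal, <- !CInt_plus by (intros; Ccontinuity; auto).
  apply CInt_ext. intros t. unfold curve3. ring.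
Qed.

End SpaceCurve.

Section ZetaInverseIntegral.
Variables (m n : nat) (u : nat -> nat) (Ups : nat -> nat -> nat -> C).
Hypothesis Hmn : (m <= n)%nat.
Hypothesis Hu : forall s, (m < s <= n)%nat -> (1 <= u s <= m)%nat.
Hypothesis Hzero : forall r s, (m < r <= n)%nat -> (m < s <= n)%nat ->
  emul m n u Ups (basis r) (basis s) = ezero.
Variables (a b : nat -> C) (x y z dx dy dz : R -> R).
Hypothesis x_derive : forall t, is_derive x t (dx t).
Hypothesis y_derive : forall t, is_derive y t (dy t).
Hypothesis z_derive : forall t, is_derive z t (dz t).
Hypothesis dx_cont : forall t, continuous dx t.
Hypothesis dy_cont : forall t, continuous dy t.
Hypothesis dz_cont : forall t, continuous dz t.
Hypothesis x_closed : x (2 * PI) = x 0.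
Hypothesis y_closed : y (2 * PI) = y 0.
Hypothesis z_closed : z (2 * PI) = z 0.

Let zeta_at (t : R) : elt := zeta m (vec n a) (vec n b) (x t) (y t) (z t).

Hypothesis zeta_unit : forall v t, (1 <= v <= m)%nat -> fu (zeta_at t) v <> 0.
Hypothesis zeta_winds : forall v, (1 <= v <= m)%nat ->
  winds_once_positively (fun t => fu (zeta_at t) v).

Lemma zeta_at_coord k t : (1 <= k <= n)%nat -> zeta_at t k = curve3 x y z (eone m k) (a k) (b k) t.
Proof. intros Hk. apply zeta_coord, Hk. Qed.

Lemma zeta_at_semisimple v t : (1 <= v <= m)%nat -> zeta_at t v = curve3 x y z 1 (a v) (b v) t.
Proof. intros Hv. rewrite zeta_at_coord, eone_in by lia. reflexivity. Qed.

Lemma zeta_at_radical k t : (m < k <= n)%nat -> zeta_at t k = curve3 x y z 0 (a k) (b k) t.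
Proof. intros Hk. rewrite zeta_at_coord, eone_out by lia. reflexivity. Qed.

Lemma curve3_semisimple_neq0 v t : (1 <= v <= m)%nat -> curve3 x y z 1 (a v) (b v) t <> 0.
Proof. intros Hv. rewrite <- zeta_at_semisimple by exact Hv. apply zeta_unit, Hv. Qed.

Lemma curve3_closed c1 c2 c3 : curve3 x y z c1 c2 c3 0 = curve3 x y z c1 c2 c3 (2 * PI).
Proof. unfold curve3. rewrite x_closed, y_closed, z_closed. reflexivity. Qed.

Lemma einv_zeta_semisimple k t : (1 <= k <= m)%nat ->
  einv m n u Ups (zeta_at t) k = / curve3 x y z 1 (a k) (b k) t.
Proof.
  intros Hk. rewrite einv_coord_semisimple, zeta_at_semisimple
    by (assumption || (intros v Hv; apply zeta_unit, Hv)).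
  reflexivity.
Qed.

Lemma einv_zeta_radical k t : (m < k <= n)%nat ->
  einv m n u Ups (zeta_at t) k =
  - curve3 x y z 0 (a k) (b k) t /
    (curve3 x y z 1 (a (u k)) (b (u k)) t * curve3 x y z 1 (a (u k)) (b (u k)) t).
Proof.
  intros Hk. assert (Huk := Hu k Hk).
  rewrite einv_coord_radical, zeta_at_radical, zeta_at_semisimple
    by (assumption || (intros v Hv; apply zeta_unit, Hv)).
  reflexivity.
Qed.

Let curve_derive c1 c2 c3 t : is_Cderive (curve3 x y z c1 c2 c3) t (curve3 dx dy dz c1 c2 c3 t) :=
  is_Cderive_curve3 x y z dx dy dz x_derive y_derive z_derive c1 c2 c3 t.
Let speed_cont c1 c2 c3 t : Ccontinuous (curve3 dx dy dz c1 c2 c3) t :=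
  Ccontinuous_curve3 dx dy dz dx_cont dy_cont dz_cont c1 c2 c3 t.

Lemma hyper_int_zeta_semisimple k : (1 <= k <= m)%nat ->
  hyper_int m n u Ups (vec n a) (vec n b) (fun t => einv m n u Ups (zeta_at t)) x y z k
  = 2 * RtoC PI * Ci.
Proof.
  intros Hk. set (w := curve3 x y z 1 (a k) (b k)).
  assert (Hw : forall t, is_Cderive w t (curve3 dx dy dz 1 (a k) (b k) t)) by apply curve_derive.
  assert (Hw0 : forall t, w t <> 0) by (intros; apply curve3_semisimple_neq0, Hk).
  assert (Hc : forall t, Ccontinuous (fun s => / w s) t) by (intros; eapply Ccontinuous_inv; auto).
  rewrite hyper_int_coord_semisimple, !vec_in by (assumption || lia).
  rewrite (line_int3_ext _ (fun t => / w t)) by (intros; apply einv_zeta_semisimple, Hk).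
  rewrite (line_int3_eq_CInt x y z dx dy dz) by assumption.
  apply (CInt_dlog_winding w); [exact Hw|apply speed_cont|exact Hw0|apply curve3_closed|].
  replace w with (fun t => fu (zeta_at t) k); [apply zeta_winds, Hk|].
    apply functional_extensionality. intros t. apply zeta_at_semisimple, Hk.
Qed.

Lemma hyper_int_zeta_radical k : (m < k <= n)%nat ->
  hyper_int m n u Ups (vec n a) (vec n b) (fun t => einv m n u Ups (zeta_at t)) x y z k = 0.
Proof.
  intros Hk. assert (Huk := Hu k Hk).
  set (v := curve3 x y z 0 (a k) (b k)). set (w := curve3 x y z 1 (a (u k)) (b (u k))).
  assert (Hv : forall t, is_Cderive v t (curve3 dx dy dz 0 (a k) (b k) t)) by apply curve_derive.
  assert (Hw : forall t, is_Cderive w t (curve3 dx dy dz 1 (a (u k)) (b (u k)) t))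
    by apply curve_derive.
  assert (Hw0 : forall t, w t <> 0) by (intros; apply curve3_semisimple_neq0, Huk).
  rewrite hyper_int_coord_radical, !vec_in by (assumption || lia).
  assert (Hc1 : forall t, Ccontinuous (fun s => - v s / (w s * w s)) t)
    by (intros; eapply Ccontinuous_opp_div_sqr; auto).
  assert (Hc2 : forall t, Ccontinuous (fun s => / w s) t) by (intros; eapply Ccontinuous_inv; auto).
  rewrite (line_int3_ext _ (fun t => - v t / (w t * w t))) by (intros; apply einv_zeta_radical, Hk).
  rewrite (line_int3_ext (fun t => einv m n u Ups (zeta_at t) (u k)) (fun t => / w t))
    by (intros; apply einv_zeta_semisimple, Huk).
  rewrite !(line_int3_eq_CInt x y z dx dy dz) by assumption.
  (* the integrand is the derivative of v / w *)
  rewrite (CInt_dquotient 0 (2 * PI) v w); auto.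
  unfold v, w. rewrite <- !curve3_closed. ring.
Qed.
Lemma hyper_int_zeta_inverse :
  hyper_int m n u Ups (vec n a) (vec n b) (fun t => einv m n u Ups (zeta_at t)) x y z
  = escal (2 * RtoC PI * Ci) (eone m).
Proof.
  apply functional_extensionality. intros k. unfold escal.
  destruct (Nat.le_gt_cases 1 k); [destruct (Nat.le_gt_cases k m); [|destruct (Nat.le_gt_cases k n)]|].
  - rewrite hyper_int_zeta_semisimple, eone_in by lia. ring.
  - rewrite hyper_int_zeta_radical, eone_out by lia. ring.
  - rewrite hyper_int_coord_out, eone_out by (assumption || lia). ring.
  - rewrite hyper_int_coord_out, eone_out by (assumption || lia). ring.
Qed.

End ZetaInverseIntegral.

Definition circ (r p q t : R) : R := r * (cos t * p + sin t * q).

Lemma is_derive_circ r p q t : is_derive (circ r p q) t (circ r q (- p) t).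
Proof. unfold circ. auto_derive; [exact I|Rring]. Qed.

Lemma continuous_circ r p q t : continuous (circ r p q) t.
Proof.
  apply (ex_derive_continuous (K := R_AbsRing) (V := R_NormedModule)).
  eexists. apply is_derive_circ.
Qed.

Lemma circ_2PI r p q : circ r p q (2 * PI) = circ r p q 0.
Proof. unfold circ. rewrite cos_2PI, sin_2PI, cos_0, sin_0. reflexivity. Qed.

Lemma cos_sin_reduce t : exists t', (0 <= t' <= 2 * PI)%R /\ cos t = cos t' /\ sin t = sin t'.
Proof.
  assert (HPI := PI_RGT_0).
  destruct (base_Int_part (t / (2 * PI))) as [H1 H2].
  set (k := Int_part (t / (2 * PI))) in H1, H2. clearbody k.
  exists (t - 2 * IZR k * PI)%R. split.
  - assert (Ht : t = (t / (2 * PI) * (2 * PI))%R) by (field; lra).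
    rewrite Ht at 1 2. nra.
  - destruct (ZArith_dec.Z_le_gt_dec 0 k) as [Hk|Hk].
    + destruct (IZN k Hk) as [j ->]. rewrite <- INR_IZR_INZ.
      rewrite <- (cos_period (t - 2 * INR j * PI) j), <- (sin_period (t - 2 * INR j * PI) j).
      replace (t - 2 * INR j * PI + 2 * INR j * PI)%R with t by ring. auto.
    + destruct (IZN (- k) ltac:(lia)) as [j Hj].
      replace (IZR k) with (- INR j)%R by (rewrite INR_IZR_INZ, <- Hj, opp_IZR; ring).
      replace (t - 2 * - INR j * PI)%R with (t + 2 * INR j * PI)%R by ring.
      rewrite cos_period, sin_period. auto.
Qed.

Theorem theorem6
  (m n : nat) (Hm : (1 <= m)%nat) (Hmn : (m <= n)%nat)
  (u : nat -> nat) (Hu : forall s, (m < s <= n)%nat -> (1 <= u s <= m)%nat)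
  (Ups : nat -> nat -> nat -> C)
  (* A_n^m is commutative and associative *)
  (Hcomm : forall x y : elt, emul m n u Ups x y = emul m n u Ups y x)
  (Hassoc : forall x y w : elt,
     emul m n u Ups (emul m n u Ups x y) w = emul m n u Ups x (emul m n u Ups y w))
  (* N is a zero algebra *)
  (Hzero : forall r s, (m < r <= n)%nat -> (m < s <= n)%nat ->
     emul m n u Ups (basis r) (basis s) = ezero)
  (a b : nat -> C)
  (* e1 = 1, e2 = vec n a, e3 = vec n b linearly independent over R *)
  (Hindep : forall x y z : R, zeta m (vec n a) (vec n b) x y z = ezero ->
     x = 0%R /\ y = 0%R /\ z = 0%R)
  (* standing assumption f_u(E_3) = C *)
  (Hsurj : forall v, (1 <= v <= m)%nat -> forall w : C,
     exists x y z : R, fu (zeta m (vec n a) (vec n b) x y z) v = w)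
  (* the circle C' : t |-> Rad (cos t p + sin t q), t in [0, 2 pi] *)
  (Rad : R) (HRad : (0 < Rad)%R)
  (p1 p2 p3 q1 q2 q3 : R)
  (Hp : (p1 * p1 + p2 * p2 + p3 * p3 = 1)%R)
  (Hq : (q1 * q1 + q2 * q2 + q3 * q3 = 1)%R)
  (Hpq : (p1 * q1 + p2 * q2 + p3 * q3 = 0)%R)
  (* each f_u(C) is a positively oriented Jordan curve bounding a domain containing 0 *)
  (HC : forall v, (1 <= v <= m)%nat ->
     let w := fun t : R =>
       fu (zeta m (vec n a) (vec n b)
             (Rad * (cos t * p1 + sin t * q1))
             (Rad * (cos t * p2 + sin t * q2))
             (Rad * (cos t * p3 + sin t * q3))) v in
     jordan_on w /\ winds_once_positively w) :
  hyper_int m n u Ups (vec n a) (vec n b)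
    (fun t : R => einv m n u Ups
       (zeta m (vec n a) (vec n b)
          (Rad * (cos t * p1 + sin t * q1))
          (Rad * (cos t * p2 + sin t * q2))
          (Rad * (cos t * p3 + sin t * q3))))
    (fun t : R => Rad * (cos t * p1 + sin t * q1))%R
    (fun t : R => Rad * (cos t * p2 + sin t * q2))%R
    (fun t : R => Rad * (cos t * p3 + sin t * q3))%R
  = escal (2 * RtoC PI * Ci) (eone m).
Proof.
  assert (Hunit : forall v t, (1 <= v <= m)%nat ->
    fu (zeta m (vec n a) (vec n b) (circ Rad p1 q1 t) (circ Rad p2 q2 t) (circ Rad p3 q3 t)) v <> 0).
  { intros v t Hv. destruct (cos_sin_reduce t) as [t' [Ht' [Hcos Hsin]]].
    unfold circ. rewrite Hcos, Hsin. exact (proj1 (proj2 (HC v Hv)) t' Ht'). }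
  apply (hyper_int_zeta_inverse m n u Ups Hmn Hu Hzero a b
           (circ Rad p1 q1) (circ Rad p2 q2) (circ Rad p3 q3)
           (circ Rad q1 (- p1)) (circ Rad q2 (- p2)) (circ Rad q3 (- p3)));
    auto using is_derive_circ, continuous_circ, circ_2PI.
  intros v Hv. exact (proj2 (HC v Hv)).
Qed.
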